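(* For every $n\ge 2$, $$N(n)=\left(\sum_{i=0}^{n-1}\frac{(n-1)!}{i!}\right)N(n-1),$$ where $N(1)=1$.
   Context: A semi-Heyting algebra is an algebra $\langle L,\vee,\wedge,\to,0,1\rangle$ such that: (SH1) $\langle L,\vee,\wedge,0,1\rangle$ is a bounded lattice with least element $0$ and greatest element $1$; (SH2) $x\wedge(x\to y)=x\wedge y$; (SH3) $x\wedge(y\to z)=x\wedge[(x\wedge y)\to(x\wedge z)]$; (SH4) $x\to x=1$, for all $x,y,z\in L$. For $n\ge 1$, $C_n$ denotes the chain $a_0<a_1<\cdots<a_{n-1}$ with $0=a_0$, $1=a_{n-1}$ (for $n=1$, $0=1$), with $\wedge=\min$, $\vee=\max$. $N(n)$ denotes the number of binary operations $\to$ on $C_n$ such that $\langle C_n,\vee,\wedge,\to,0,1\rangle$ is a semi-Heyting algebra. *)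

From mathcomp Require Import all_boot.
Set Implicit Arguments. Unset Strict Implicit. Unset Printing Implicit Defensive.

(* The chain C_n is modelled by 'I_n = {0,...,n-1}, a_i = i, with
   0 = a_0 (value 0) and 1 = a_{n-1} (value n.-1); meet = min. *)
Definition chain_meet (n : nat) (x y : 'I_n) : 'I_n := if x <= y then x else y.

(* A binary operation on C_n is a finite function 'I_n * 'I_n -> 'I_n,
   with x -> y := imp (x, y).  (SH1) holds automatically for the chain. *)
Definition is_semiHeyting (n : nat) (imp : {ffun 'I_n * 'I_n -> 'I_n}) : bool :=
  [forall x : 'I_n, forall y : 'I_n,
      chain_meet x (imp (x, y)) == chain_meet x y]
  && [forall x : 'I_n, forall y : 'I_n, forall z : 'I_n,
      chain_meet x (imp (y, z))
        == chain_meet x (imp (chain_meet x y, chain_meet x z))]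
  && [forall x : 'I_n, (imp (x, x) : nat) == n.-1].

Definition N (n : nat) : nat := #|[set imp : {ffun 'I_n * 'I_n -> 'I_n} | is_semiHeyting imp]|.

From mathcomp Require Import all_boot zify.
Set Implicit Arguments. Unset Strict Implicit.

(* On a chain, (SH2) and (SH3) only constrain each row [z |-> y -> z]
   separately, and each row is determined by a threshold [k > y]:
   [y -> z = z] for [z < y], [y -> y = 1], [y -> z] is any value [>= z] for
   [y < z < k], and [y -> z = k - 1] for [z >= k].  Every choice of one
   threshold per row yields a semi-Heyting algebra, so
   [N(n) = prod_y sum_k prod_(y < z < k) (n - z) = prod_(d < n) A(d)] with
   [A(d) = sum_j d^_j = sum_i d!/i!] the number of arrangements of a [d]-set,
   from which the recursion is immediate. *)

Definition arrangements (d : nat) : nat := \sum_(i < d.+1) d`! %/ i`!.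

Lemma arrangementsE d : arrangements d = \sum_(j < d.+1) d ^_ j.
Proof.
rewrite /arrangements (reindex_inj rev_ord_inj) /=.
by apply: eq_bigr => j _; rewrite subSS ffact_factd // -ltnS.
Qed.

Lemma chain_meetE n (x y : 'I_n) : chain_meet x y = minn x y :> nat.
Proof. by rewrite /chain_meet; case: leqP => h; lia. Qed.

Lemma card_ord_eq N c : c < N -> #|[pred v : 'I_N | (v : nat) == c]| = 1.
Proof.
move=> ltcN; rewrite -(card1 (Ordinal ltcN)); apply: eq_card => v.
by rewrite !inE.
Qed.

Lemma card_ord_geq N z : #|[pred v : 'I_N | z <= v]| = N - z.
Proof.
by rewrite -sum1_card -(big_geq_mkord z N xpredT (fun=> 1)) sum_nat_const_nat muln1.
Qed.

Definition row_entry (m y k z v : nat) : bool :=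
  if z < y then v == z else if z == y then v == m
  else if z < k then z <= v else v == k.-1.

Lemma row_entryP m y k z v : row_entry m y k z v <->
  [/\ z < y -> v = z, z = y -> v = m,
      y < z < k -> z <= v & y < z -> k <= z -> v = k.-1].
Proof.
rewrite /row_entry.
case: ifP => ?; [|case: ifP => ?; [|case: ifP => ?]];
  by split=> [? | [] *]; try split; lia.
Qed.

Section Rows.

Variables (m : nat) (imp : {ffun 'I_m.+1 * 'I_m.+1 -> 'I_m.+1}).

Definition impn (a b : nat) : nat := imp (inord a, inord b).

Lemma impn_le a b : impn a b <= m.
Proof. by rewrite -ltnS ltn_ord. Qed.

Lemma imp_impn (y z : 'I_m.+1) : imp (y, z) = impn y z :> nat.
Proof. by rewrite /impn !inord_val. Qed.

Definition semiHeyting_nat : Prop :=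
  [/\ forall x y, x <= m -> y <= m -> minn x (impn x y) = minn x y,
      forall x y z, x <= m -> y <= m -> z <= m ->
        minn x (impn y z) = minn x (impn (minn x y) (minn x z))
    & forall x, x <= m -> impn x x = m].

Lemma is_semiHeytingP : is_semiHeyting imp <-> semiHeyting_nat.
Proof.
split.
  case/andP => [/andP [/forallP SH2 /forallP SH3] /forallP SH4]; split.
  - move=> x y lexm leym.
    move/forallP: (SH2 (inord x)) => /(_ (inord y)) /eqP/(congr1 val).
    by rewrite /= !chain_meetE imp_impn !inordK.
  - move=> x y z lexm leym lezm.
    move/forallP: (SH3 (inord x)) => /(_ (inord y)) /forallP /(_ (inord z)).
    by move=> /eqP/(congr1 val); rewrite /= !chain_meetE !imp_impn !chain_meetE !inordK.
  - by move=> x lexm; move/eqP: (SH4 (inord x)); rewrite imp_impn inordK.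
case=> SH2 SH3 SH4; apply/andP; split; first (apply/andP; split).
- apply/forallP => x; apply/forallP => y; apply/eqP; apply: val_inj.
  by rewrite /= !chain_meetE imp_impn (SH2 _ _ (ltn_ord x) (ltn_ord y)).
- apply/forallP => x; apply/forallP => y; apply/forallP => z; apply/eqP; apply: val_inj.
  rewrite /= !chain_meetE !imp_impn !chain_meetE.
  by rewrite (SH3 _ _ _ (ltn_ord x) (ltn_ord y) (ltn_ord z)).
- by apply/forallP => x; rewrite imp_impn (SH4 _ (ltn_ord x)).
Qed.

Definition row_shape (y k : nat) : Prop :=
  forall z, z <= m -> row_entry m y k z (impn y z).

Lemma row_shape_inj y k1 k2 : y < k1 <= m.+1 -> y < k2 <= m.+1 ->
  row_shape y k1 -> row_shape y k2 -> k1 = k2.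
Proof.
move=> hk1 hk2 R1 R2; wlog lt12 : k1 k2 hk1 hk2 R1 R2 / k1 < k2.
  by move=> W; case: (ltngtP k1 k2) => // lt; [exact: W | symmetry; exact: W].
have lek1m : k1 <= m by lia.
have /row_entryP [_ _ _ fall1] := R1 k1 lek1m.
have /row_entryP [_ _ rise2 _] := R2 k1 lek1m.
by have := fall1 ltac:(lia) (leqnn _); have := rise2 ltac:(lia); lia.
Qed.

Lemma row_shapes_semiHeyting :
  (forall y, y <= m -> exists2 k, y < k <= m.+1 & row_shape y k) ->
  semiHeyting_nat.
Proof.
move=> rows; split.
- move=> x y lexm leym; have [k hk /(_ y leym)/row_entryP[? ? ? ?]] := rows x lexm.
  by have := impn_le x y; lia.
- move=> x y z lexm leym lezm.
  have [kx _ Rx] := rows x lexm; have [ky hky Ry] := rows y leym.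
  have /row_entryP[Ryz_lt Ryz_eq Ryz_mid Ryz_hi] := Ry z lezm.
  case: (leqP x y) => lexy; case: (leqP x z) => lexz //.
  + by have /row_entryP[_ Rxx _ _] := Rx x lexm; rewrite Rxx //; lia.
  + by have /row_entryP[Rxz _ _ _] := Rx z lezm; rewrite Rxz //; lia.
  + by have /row_entryP[_ _ ? ?] := Ry x lexm; lia.
- by move=> x lexm; have [k _ /(_ x lexm)/row_entryP[_ ->]] := rows x lexm.
Qed.

Lemma semiHeyting_row_shapes : semiHeyting_nat ->
  forall y, y <= m -> exists2 k, y < k <= m.+1 & row_shape y k.
Proof.
case=> SH2 SH3 SH4 y leym.
have below z : z <= m -> z < y -> impn y z = z.
  by move=> lezm ltzy; have := SH2 y z leym lezm; have := impn_le y z; lia.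
have above z : z <= m -> y < z -> y <= impn y z.
  by move=> lezm ltyz; have := SH2 y z leym lezm; lia.
have flat x z : z <= m -> y < x < z -> minn x (impn y z) = minn x (impn y x).
  move=> lezm ltyxz; have := SH3 x y z ltac:(lia) leym lezm.
  have -> : minn x y = y by lia.
  by have -> : minn x z = x by lia.
(* the threshold is the first column past the diagonal where the row drops *)
pose drops k := (y < k) && ((k == m.+1) || (k <= m) && (impn y k < k)).
have drops_top : drops m.+1 by rewrite /drops eqxx orTb andbT ltnS.
have [k drops_k min_k] := ex_minnP (ex_intro drops _ drops_top).
have le_k_top : k <= m.+1 := min_k _ drops_top.
have lt_yk : y < k by case/andP: drops_k.
have rising z : y < z < k -> z <= impn y z.
  move=> hz; case: (leqP z (impn y z)) => // ltvz.
  by have := min_k z; rewrite /drops ltvz andbT; lia.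
have at_k : k <= m -> impn y k = k.-1.
  move=> lekm; have lt_vk : impn y k < k.
    by case/andP: drops_k => _ /orP [/eqP | /andP []] //; lia.
  case: (ltngtP y.+1 k) => [ltSyk | ltky | eSyk].
  - by have := rising k.-1 ltac:(lia); have := flat k.-1 k lekm ltac:(lia); lia.
  - by lia.
  - by have := above k lekm lt_yk; lia.
exists k; first by lia.
move=> z lezm; apply/row_entryP; split.
- exact: below.
- by move=> ->; apply: SH4.
- exact: rising.
- move=> ltyz lekz; have lekm : k <= m by lia.
  case: (ltngtP k z) => [ltkz | | <-]; [ | lia | exact: at_k].
  by have := flat k z lezm ltac:(lia); rewrite at_k //; lia.
Qed.

End Rows.

Section Counting.

Variable m : nat.
Implicit Types (imp : {ffun 'I_m.+1 * 'I_m.+1 -> 'I_m.+1})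
  (K : {ffun 'I_m.+1 -> 'I_m.+2}).

(* [K] picks a threshold for every row; [allowed K (y, z)] is the set of values
   [imp (y, z)] may then take, empty when the threshold is invalid ([K y <= y]). *)
Definition allowed K (p : 'I_m.+1 * 'I_m.+1) : pred 'I_m.+1 :=
  fun v => (p.1 < K p.1) && row_entry m p.1 (K p.1) p.2 v.

Lemma family_allowedP imp K : imp \in family (allowed K) <->
  forall y : 'I_m.+1, y < K y /\ row_shape imp y (K y).
Proof.
split=> [/familyP fam y | rows].
  have /andP [ltyK _] := fam (y, y); split=> // z lezm.
  by have /andP [_] := fam (y, inord z); rewrite /= imp_impn inordK.
apply/familyP => -[y z]; have [ltyK row] := rows y.
by rewrite unfold_in /= ltyK imp_impn; apply: row (ltn_ord z).
Qed.

Lemma family_allowed_inj imp K1 K2 :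
  imp \in family (allowed K1) -> imp \in family (allowed K2) -> K1 = K2.
Proof.
move=> /family_allowedP rows1 /family_allowedP rows2; apply/ffunP => y.
have [lt1 row1] := rows1 y; have [lt2 row2] := rows2 y.
apply: val_inj; apply: (row_shape_inj _ _ row1 row2); apply/andP; split=> //;
  by rewrite -ltnS ltn_ord.
Qed.

Lemma is_semiHeyting_family imp :
  is_semiHeyting imp <-> exists K, imp \in family (allowed K).
Proof.
rewrite is_semiHeytingP; split=> [/semiHeyting_row_shapes rows | [K]].
  have rows' (y : 'I_m.+1) : exists k : 'I_m.+2, y < k /\ row_shape imp y k.
    have [k /andP [ltyk lekm] row] := rows y (ltn_ord y).
    by exists (Ordinal (lekm : k < m.+2)).
  have [K0 HK0] := fin_all_exists rows'.
  by exists (finfun K0); apply/family_allowedP => y; rewrite ffunE.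
move=> /family_allowedP rows; apply: row_shapes_semiHeyting => y leym.
have [ltyK row] := rows (inord y); rewrite inordK in ltyK row => //.
by exists (K (inord y)) => //; rewrite ltyK -ltnS ltn_ord.
Qed.

Lemma sum_family_allowed imp :
  \sum_K (imp \in family (allowed K)) = is_semiHeyting imp.
Proof.
case: (boolP (is_semiHeyting imp)) => [/is_semiHeyting_family [K0 fam0] | notSH].
  rewrite (bigD1 K0) //= fam0 big1 // => K neK; apply/eqP; rewrite eqb0.
  by apply: contra neK => /(family_allowed_inj fam0) ->.
rewrite big1 // => K _; apply/eqP; rewrite eqb0; apply: contra notSH => fam.
by apply/is_semiHeyting_family; exists K.
Qed.

Lemma card_row_entry y k z : y < k <= m.+1 -> z <= m ->
  #|[pred v : 'I_m.+1 | row_entry m y k z v]| = if y < z < k then m.+1 - z else 1.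
Proof.
move=> /andP [ltyk lekm] lezm; rewrite /row_entry.
case: (ltnP z y) => [ltzy | leyz] /=.
  by rewrite card_ord_eq // ifF //; apply/negbTE; lia.
case: (eqVneq z y) => [-> | neyz] /=.
  by rewrite card_ord_eq // ltnn.
case: (ltnP z k) => [ltzk | lekz] /=.
  by rewrite card_ord_geq ifT //; lia.
by rewrite card_ord_eq ?ifF //; [apply/negbTE | ]; lia.
Qed.

Definition n_allowed (y k z : nat) : nat := if y < z < k then m.+1 - z else y < k.

Lemma card_allowed K (y z : 'I_m.+1) : #|allowed K (y, z)| = n_allowed y (K y) z.
Proof.
rewrite /n_allowed; case: (boolP (y < K y)) => [ltyK | leKy].
  have leKm : K y <= m.+1 by rewrite -ltnS.
  rewrite -card_row_entry ?ltyK //; last by rewrite -ltnS.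
  by apply: eq_card => v; rewrite unfold_in /= ltyK.
have -> : y < z < K y = false by apply/negbTE; lia.
by rewrite eq_card0 // => v; rewrite unfold_in /= (negbTE leKy).
Qed.

Definition row_count (y k : nat) : nat := \prod_(z < m.+1) n_allowed y k z.

Lemma row_countE y k : y < k <= m.+1 -> row_count y k = (m - y) ^_ (k - y.+1).
Proof.
case/andP => ltyk lekm.
have outside a b : (forall z, a <= z < b -> (y < z < k) = false) ->
    \prod_(a <= z < b) n_allowed y k z = 1.
  move=> out; rewrite (eq_big_nat _ _ (F2 := fun=> 1)) ?big1_eq // => z.
  by move=> /out; rewrite /n_allowed ltyk => ->.
rewrite /row_count -(big_mkord xpredT (n_allowed y k)).
rewrite (big_cat_nat _ (n := k)) //= (outside k) ?muln1; last first.
  by move=> z hz; apply/negbTE; lia.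
rewrite (big_cat_nat _ (n := y.+1)) //= (outside 0) ?mul1n; last first.
  by move=> z hz; apply/negbTE; lia.
rewrite -{1}(add0n y.+1) big_addn big_mkord ffact_prod; apply: eq_bigr => j _.
by rewrite /n_allowed ifT; have := ltn_ord j; lia.
Qed.

Lemma sum_row_count y : y <= m -> \sum_(k < m.+2) row_count y k = arrangements (m - y).
Proof.
move=> leym; rewrite -(big_mkord xpredT (row_count y)).
rewrite (big_cat_nat _ (n := y.+1)) //=; last by lia.
rewrite big_nat big1 ?add0n => [|k /andP [_ ltky]]; last first.
  by rewrite /row_count big_ord_recl {1}/n_allowed ifF /=; [lia | apply/negbTE; lia].
rewrite (eq_big_nat _ _ (F2 := fun k => (m - y) ^_ (k - y.+1))); last first.
  by move=> k hk; apply: row_countE; lia.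
rewrite -{1}(add0n y.+1) big_addn big_mkord arrangementsE subSS subSn //.
by apply: eq_bigr => j _; rewrite addnK.
Qed.

Lemma card_family_allowed K : #|family (allowed K)| = \prod_(y < m.+1) row_count y (K y).
Proof.
rewrite card_family foldrE big_map big_enum /= /row_count pair_bigA.
by apply: eq_bigr => -[y z] _; apply: card_allowed.
Qed.

Lemma N_sum_card_family : N m.+1 = \sum_K #|family (allowed K)|.
Proof.
rewrite /N -sum1_card big_mkcond /=.
rewrite (eq_bigr (fun imp => \sum_K (imp \in family (allowed K)))); last first.
  by move=> imp _; rewrite sum_family_allowed inE.
rewrite exchange_big /=; apply: eq_bigr => K _.
rewrite -sum1_card [RHS]big_mkcond /=; apply: eq_bigr => imp _.
by case: (imp \in family (allowed K)).
Qed.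

Lemma N_eq_prod_arrangements : N m.+1 = \prod_(d < m.+1) arrangements d.
Proof.
rewrite N_sum_card_family (eq_bigr _ (fun K _ => card_family_allowed K)).
rewrite -(bigA_distr_bigA (fun (y : 'I_m.+1) (k : 'I_m.+2) => row_count y k)) /=.
rewrite [RHS](reindex_inj rev_ord_inj); apply: eq_bigr => y _.
by rewrite sum_row_count // -ltnS.
Qed.

End Counting.

Theorem mainTheorem3 (n : nat) (hn : 2 <= n) :
  N n = (\sum_(i < n) (n.-1)`! %/ i`!) * N n.-1.
Proof.
case: n hn => [|[|m]] // _.
by rewrite !N_eq_prod_arrangements big_ord_recr mulnC.
Qed.
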